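(* Let $k\geq 3$ and let $G$ be a diregular $(2,k,+3)$-digraph. Let $u,v$ be distinct vertices with exactly one common out-neighbour $u_2$, and write $N^+(u)=\{u_1,u_2\}$, $N^+(v)=\{v_1,u_2\}$. Then $v_1\in N^{k-1}(u_1)\cup O(u)$ and $u_1\in N^{k-1}(v_1)\cup O(v)$.
   Context: A digraph is $k$-geodetic if for every ordered pair of vertices $x,y$ there is at most one directed path from $x$ to $y$ of length at most $k$ (the trivial path counts). A diregular $(2,k,+3)$-digraph is a $k$-geodetic digraph of order $1+2+\dots+2^k+3$ in which every vertex has in- and out-degree $2$. $N^+(x)$ is the set of out-neighbours of $x$; $N^l(x)$ is the set of end-vertices of directed paths of length $l$ starting at $x$. $d(x,y)$ is the directed distance; $O(x)=\{y: d(x,y)\geq k+1\}$ is the outlier set of $x$. *)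

From mathcomp Require Import all_boot.
Set Implicit Arguments. Unset Strict Implicit. Unset Printing Implicit Defensive.

(* A digraph is a finite vertex type V with an arc relation e : rel V.
   A walk from x is a sequence p of vertices with x :: p an e-path;
   its length is size p and it ends at last x p. *)

Definition dwalk (V : finType) (e : rel V) (x y : V) (p : seq V) : bool :=
  path e x p && (last x p == y).

Definition outN (V : finType) (e : rel V) (x : V) : {set V} := [set y | e x y].
Definition inN (V : finType) (e : rel V) (x : V) : {set V} := [set y | e y x].

Definition k_geodetic (V : finType) (e : rel V) (k : nat) : Prop :=
  forall (x y : V) (p q : seq V),
    dwalk e x y p -> size p <= k -> dwalk e x y q -> size q <= k -> p = q.

Definition diregular_2k3 (V : finType) (e : rel V) (k : nat) : Prop :=
  [/\ k_geodetic e k,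
      #|V| = (\sum_(i < k.+1) 2 ^ i) + 3 &
      forall x : V, #|outN e x| = 2 /\ #|inN e x| = 2].

Definition Nl (V : finType) (e : rel V) (l : nat) (x y : V) : Prop :=
  exists p : seq V, dwalk e x y p /\ size p = l.

(* y \in O(x): d(x,y) >= k+1, i.e. no walk of length <= k from x to y
   (including the case d(x,y) = infinity) *)
Definition outlier (V : finType) (e : rel V) (k : nat) (x y : V) : Prop :=
  forall l, l <= k -> ~ Nl e l x y.

From mathcomp Require Import all_boot.
Set Implicit Arguments. Unset Strict Implicit. Unset Printing Implicit Defensive.

(* If v1 is not an outlier of u, a walk of length at most k from u to v1 must
   start with the arc u -> u1 (starting with u -> u2 it would give a second walk
   from v to v1 besides the arc v -> v1), so u1 reaches v1 in j <= k - 1 steps.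
   If j <= k - 2, then v and the 2^(k-j) >= 4 vertices of N^(k-j)(v1), except
   possibly u itself, are all outliers of u; but k-geodeticity makes the Moore tree
   of depth k rooted at u have 1 + 2 + ... + 2^k distinct vertices, so u has only
   three outliers. The second claim is the first with u and v exchanged. *)

Lemma card_bigcup_disjoint (I T : finType) (P : pred I) (F : I -> {set T}) :
  {in P &, forall i j, i != j -> [disjoint F i & F j]} ->
  #|\bigcup_(i | P i) F i| = \sum_(i | P i) #|F i|.
Proof.
move=> disjF; pose G i := if P i then F i else set0.
have -> : \bigcup_(i | P i) F i = \bigcup_i G i by rewrite big_mkcond.
rewrite -sum1_card partition_disjoint_bigcup => [|i j ij].
  rewrite [RHS]big_mkcond; apply: eq_bigr => i _.
  by rewrite sum1_card /G; case: (P i); rewrite ?cards0.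
rewrite /G -setI_eq0; case Pi: (P i); last by rewrite set0I.
by case Pj: (P j); rewrite ?setI0 // setI_eq0 disjF.
Qed.

Section Walks.

Variables (V : finType) (e : rel V).

Lemma dwalk_nil x y : dwalk e x y [::] = (x == y).
Proof. by []. Qed.

Lemma dwalk0 x : dwalk e x x [::].
Proof. exact: eqxx. Qed.

Lemma dwalk_cons x y z p : dwalk e x y (z :: p) = e x z && dwalk e z y p.
Proof. by rewrite /dwalk /= andbA. Qed.

Lemma dwalk1 x y : e x y -> dwalk e x y [:: y].
Proof. by rewrite /dwalk /= => ->; rewrite eqxx. Qed.

Lemma dwalk_cat x y z p q : dwalk e x y p -> dwalk e y z q -> dwalk e x z (p ++ q).
Proof. by rewrite /dwalk cat_path last_cat => /andP[-> /eqP ->] /andP[-> ->]. Qed.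

Lemma dwalk_rcons x y z p : dwalk e x y p -> e y z -> dwalk e x z (rcons p z).
Proof. by move=> hp /dwalk1 hz; rewrite -cats1; apply: dwalk_cat hp hz. Qed.

Lemma Nl0 x y : Nl e 0 x y <-> x = y.
Proof.
split=> [[p [hp sp]] | ->]; last by exists [::]; rewrite dwalk_nil.
by move: hp; rewrite (size0nil sp) dwalk_nil => /eqP.
Qed.

Lemma NlS l x y : Nl e l.+1 x y <-> exists2 z, e x z & Nl e l z y.
Proof.
split=> [[[|z p] [//]] | [z exz [p [hp <-]]]].
  by rewrite dwalk_cons => /andP[exz hp] [sp]; exists z => //; exists p.
by exists (z :: p); rewrite dwalk_cons exz hp.
Qed.

Lemma outN_set2_neq x a b : #|outN e x| = 2 -> outN e x = [set a; b] -> a != b.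
Proof. by move=> deg2 out_x; move: deg2; rewrite out_x cards2; case: (a != b). Qed.

Variable k : nat.
Hypothesis geo : k_geodetic e k.

Lemma geodetic_size x y p q :
  dwalk e x y p -> dwalk e x y q -> size p <= k -> size q <= k -> size p = size q.
Proof. by move=> hp hq sp sq; rewrite (geo hp sp hq sq). Qed.

Lemma geodetic_closed_gt x p : dwalk e x x p -> 0 < size p -> k < size p.
Proof.
move=> hp; rewrite !ltnNge; apply: contra => sp.
by rewrite (geo hp sp (dwalk0 x) (leq0n k)).
Qed.

Lemma geodetic_head x a b y p q :
  e x a -> e x b -> dwalk e a y p -> dwalk e b y q -> size p < k -> size q < k ->
  a = b.
Proof.
move=> exa exb hp hq sp sq.
have hap : dwalk e x y (a :: p) by rewrite dwalk_cons exa.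
have hbq : dwalk e x y (b :: q) by rewrite dwalk_cons exb.
by case: (geo hap sp hbq sq).
Qed.

End Walks.

Fixpoint Nlset (V : finType) (e : rel V) (l : nat) (x : V) : {set V} :=
  if l is l'.+1 then \bigcup_(y in outN e x) Nlset e l' y else [set x].

Definition ball (V : finType) (e : rel V) (k : nat) (x : V) : {set V} :=
  \bigcup_(l < k.+1) Nlset e l x.

Section Balls.

Variables (V : finType) (e : rel V).

Lemma NlsetP l x y : reflect (Nl e l x y) (y \in Nlset e l x).
Proof.
elim: l x => [|l IH] x /=.
  rewrite in_set1; apply: (iffP eqP) => [->|/Nl0 ->] //.
  exact/Nl0.
apply: (iffP bigcupP) => [[z] | /NlS [z exz /IH]]; last by exists z; rewrite ?inE.
by rewrite inE => exz /IH Nzy; apply/NlS; exists z.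
Qed.

Lemma ballP k x y : reflect (exists2 l, l <= k & Nl e l x y) (y \in ball e k x).
Proof.
rewrite /ball; apply: (iffP bigcupP) => [[l _ /NlsetP Nxy] | [l lk /NlsetP Nxy]].
  by exists l; rewrite // -ltnS.
by exists (Ordinal (lk : l < k.+1)).
Qed.

Lemma outlierP k x y : reflect (outlier e k x y) (y \notin ball e k x).
Proof.
apply: (iffP negP) => [not_in l lk Nxy | outl /ballP[l]]; last exact: outl.
by apply: not_in; apply/ballP; exists l.
Qed.

Variables (k d : nat).
Hypotheses (geo : k_geodetic e k) (outdeg : forall x, #|outN e x| = d).

Lemma card_Nlset l x : l <= k -> #|Nlset e l x| = d ^ l.
Proof.
elim: l x => [|l IH] x lk /=; first by rewrite cards1.
rewrite card_bigcup_disjoint => [|y z]; last first.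
  rewrite !inE => exy exz; apply: contraNT; rewrite -setI_eq0 => /set0Pn[w].
  rewrite inE => /andP[/NlsetP[p [hp sp]] /NlsetP[q [hq sq]]].
  by apply/eqP; apply: (geodetic_head geo exy exz hp hq); rewrite ?sp ?sq.
rewrite (eq_bigr (fun=> d ^ l)) => [|y _]; last exact/IH/ltnW.
by rewrite sum_nat_const outdeg expnS.
Qed.

Lemma card_ball x : #|ball e k x| = \sum_(l < k.+1) d ^ l.
Proof.
rewrite card_bigcup_disjoint => [|l m _ _ lm].
  by apply: eq_bigr => l _; rewrite card_Nlset // -ltnS.
rewrite -setI_eq0; apply/set0Pn => [[w]].
rewrite inE => /andP[/NlsetP[p [hp sp]] /NlsetP[q [hq sq]]].
move/eqP: lm; apply; apply/val_inj.
by rewrite /= -sp -sq (geodetic_size geo hp hq) // ?sp ?sq -ltnS.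
Qed.

Lemma card_outliers x : #|~: ball e k x| = #|V| - \sum_(l < k.+1) d ^ l.
Proof. by rewrite -(cardsC (ball e k x)) card_ball addKn. Qed.

End Balls.

Section CommonOutNeighbour.

Variables (V : finType) (e : rel V) (k : nat) (u v u1 u2 v1 : V).
Hypotheses (k_ge2 : 2 <= k) (geo : k_geodetic e k)
  (outdeg : forall x, #|outN e x| = 2) (outliers_u : #|~: ball e k u| <= 3).
Hypotheses (uv : u != v) (out_u : outN e u = [set u1; u2])
  (out_v : outN e v = [set v1; u2]).
Hypotheses (u12 : u1 != u2) (v12 : v1 != u2) (uv1 : u1 != v1).

Let k_gt0 : 0 < k := ltnW k_ge2.

Let eu1 : e u u1. Proof. by have := set21 u1 u2; rewrite -out_u inE. Qed.
Let eu2 : e u u2. Proof. by have := set22 u1 u2; rewrite -out_u inE. Qed.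
Let ev1 : e v v1. Proof. by have := set21 v1 u2; rewrite -out_v inE. Qed.
Let ev2 : e v u2. Proof. by have := set22 v1 u2; rewrite -out_v inE. Qed.

Let arc_u z : e u z -> z = u1 \/ z = u2.
Proof. by move=> euz; apply/set2P; rewrite -out_u inE. Qed.

Lemma walk_to_v1_via_u1 l :
  l <= k -> Nl e l u v1 -> exists2 j, l = j.+1 & Nl e j u1 v1.
Proof.
case: l => [_ /Nl0 v1u | l lk /NlS[z /arc_u[] -> Nzv1]]; last 2 first.
- by exists l.
- have [q [hq sq]] := Nzv1.
  have lk' : size q < k by rewrite sq.
  have /eqP := geodetic_head geo ev2 ev1 hq (dwalk0 _ _) lk' k_gt0.
  by rewrite eq_sym (negbTE v12).
have evu : e v u by rewrite v1u.
have /eqP := geodetic_head geo evu ev2 (dwalk1 eu2) (dwalk0 _ _) k_ge2 k_gt0.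
by rewrite v1u (negbTE v12).
Qed.

Section ShortWalk.

Variable p : seq V.
Hypotheses (walk_p : dwalk e u1 v1 p) (short_p : (size p).+2 <= k).

Let size_p_gt0 : 0 < size p.
Proof. by move: walk_p; case: p => //; rewrite dwalk_nil (negbTE uv1). Qed.

Let size_p_lt : size p < k := ltnW short_p.

Lemma v_outlier : v \notin ball e k u.
Proof.
apply/outlierP => -[_ /Nl0 /eqP | l lk /NlS[z /arc_u[] -> [q [hq sq]]]].
- exact/negP.
- have walk_q1 : dwalk e u1 v1 (rcons q v1) := dwalk_rcons hq ev1.
  have sq1 : size (rcons q v1) = size p.
    by apply: (geodetic_size geo walk_q1 walk_p); rewrite ?size_rcons ?sq // ltnW.
  have walk_q2 : dwalk e u1 u2 (rcons q u2) := dwalk_rcons hq ev2.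
  have sq2 : size (rcons q u2) < k by rewrite size_rcons -(size_rcons q v1) sq1.
  have /eqP := geodetic_head geo eu1 eu2 walk_q2 (dwalk0 _ _) sq2 k_gt0.
  by rewrite (negbTE u12).
- have walk_q : dwalk e u2 u2 (rcons q u2) := dwalk_rcons hq ev2.
  have := geodetic_closed_gt geo walk_q.
  rewrite size_rcons sq => /(_ isT); apply/negP.
  by rewrite ltnS -ltnNge.
Qed.

Lemma v_notin_Nlset : v \notin Nlset e (k - size p) v1.
Proof.
apply/negP => /NlsetP[q [hq sq]].
have walk_q : dwalk e v1 v1 (rcons q v1) := dwalk_rcons hq ev1.
have := geodetic_closed_gt geo walk_q.
rewrite size_rcons sq => /(_ isT); apply/negP.
by rewrite ltnS -ltnNge ltn_subrL size_p_gt0 k_gt0.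
Qed.

Lemma Nlset_outliers : Nlset e (k - size p) v1 :\ u \subset ~: ball e k u.
Proof.
apply/subsetP => w; rewrite in_setD1 in_setC => /andP[wu /NlsetP[r [hr sr]]].
have sr_lt : size r < k by rewrite sr ltn_subrL size_p_gt0 k_gt0.
apply/outlierP => -[_ /Nl0 uw | l lk /NlS[z /arc_u[] -> [q [hq sq]]]].
- by rewrite uw eqxx in wu.
- have walk_pr : dwalk e u1 w (p ++ r) := dwalk_cat walk_p hr.
  have size_pr : size (p ++ r) = k by rewrite size_cat sr subnKC // ltnW.
  have := geodetic_size geo walk_pr hq; rewrite size_pr sq leqnn ltnW //.
  by move=> /(_ isT isT) kl; rewrite kl ltnn in lk.
- have sq_lt : size q < k by rewrite sq.
  have /eqP := geodetic_head geo ev2 ev1 hq hr sq_lt sr_lt.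
  by rewrite eq_sym (negbTE v12).
Qed.

Lemma no_short_walk : False.
Proof.
set W := Nlset e (k - size p) v1.
have W_gt3 : 3 < #|W|.
  rewrite (card_Nlset geo outdeg) ?leq_subr //.
  apply: (@leq_trans (2 ^ 2)) => //.
  by rewrite leq_exp2l // leq_subRL ?addn2 // ltnW.
have sub : v |: (W :\ u) \subset ~: ball e k u.
  by rewrite subUset sub1set in_setC v_outlier Nlset_outliers.
have W_le : #|W| <= #|v |: (W :\ u)|.
  rewrite cardsU1 in_setD1 (negbTE v_notin_Nlset) andbF (cardsD1 u W).
  by case: (u \in W).
have := leq_trans W_le (leq_trans (subset_leq_card sub) outliers_u).
by rewrite leqNgt W_gt3.
Qed.

End ShortWalk.

Lemma Nl_or_outlier : Nl e k.-1 u1 v1 \/ outlier e k u v1.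
Proof.
have [/ballP[l lk /walk_to_v1_via_u1] | /outlierP] := boolP (v1 \in ball e k u); last by right.
move=> /(_ lk) [j lj [p [walk_p sp]]]; left.
have [short_p | long_p] := leqP (size p).+2 k; first by case: (no_short_walk walk_p short_p).
have kp : k = (size p).+1 by apply/eqP; rewrite eqn_leq -ltnS long_p sp -lj lk.
by exists p; rewrite kp.
Qed.

End CommonOutNeighbour.

Theorem corollary2 (V : finType) (e : rel V) (k : nat) (u v u1 u2 v1 : V) :
  3 <= k ->
  diregular_2k3 e k ->
  u != v ->
  outN e u = [set u1; u2] ->
  outN e v = [set v1; u2] ->
  outN e u :&: outN e v = [set u2] ->
  (Nl e k.-1 u1 v1 \/ outlier e k u v1) /\
  (Nl e k.-1 v1 u1 \/ outlier e k v u1).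
Proof.
move=> k_ge3 [geo card_V deg] uv out_u out_v common_u2.
have outdeg x : #|outN e x| = 2 by case: (deg x).
have outliers x : #|~: ball e k x| <= 3 by rewrite (card_outliers geo outdeg) card_V addKn.
have u12 := outN_set2_neq (outdeg u) out_u.
have v12 := outN_set2_neq (outdeg v) out_v.
have uv1 : u1 != v1.
  apply: contra u12 => /eqP u1v1.
  by rewrite -in_set1 -common_u2 in_setI out_u out_v u1v1 !set21.
have k_ge2 : 2 <= k := ltnW k_ge3.
split; first exact: Nl_or_outlier k_ge2 geo outdeg (outliers u) uv out_u out_v u12 v12 uv1.
by apply: Nl_or_outlier k_ge2 geo outdeg (outliers v) _ out_v out_u v12 u12 _; rewrite eq_sym.
Qed.
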